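(* Let $G$, $H$, $H'$ be termgraphs over a signature $\Omega$ and let $\gamma:|G|\to|H|$, $\gamma':|G|\to|H'|$, $\eta:|H|\to|H'|$ be functions such that $\gamma'=\eta\circ\gamma$. Let $\Gamma$ be a set of nodes of $G$. If $\gamma$ is strictly graphic on $\Gamma$ and $\gamma'$ is graphic on $\Gamma$, then $\eta$ is graphic on $\gamma(\Gamma)$.
   Context: A signature $\Omega$ is a set of operation symbols, each $\omega\in\Omega$ with an arity $\mathrm{ar}(\omega)\in\mathbb{N}$. For a set $X$, $X^*$ is the set of strings over $X$, and for $f:X\to Y$, $f^*:X^*\to Y^*$ is $f^*(x_1\ldots x_n)=f(x_1)\ldots f(x_n)$. A termgraph (graph) $G=(\mathcal{N}_G,\mathcal{D}_G,\mathcal{L}_G,\mathcal{S}_G)$ consists of a set of nodes $\mathcal{N}_G$ (written $|G|$), a subset $\mathcal{D}_G\subseteq\mathcal{N}_G$ of labeled nodes, a labeling function $\mathcal{L}_G:\mathcal{D}_G\to\Omega$ and a successor function $\mathcal{S}_G:\mathcal{D}_G\to\mathcal{N}_G^*$ such that for each labeled node $n$ the length of $\mathcal{S}_G(n)$ equals $\mathrm{ar}(\mathcal{L}_G(n))$; nodes not in $\mathcal{D}_G$ are unlabeled. For graphs $G,H$, a function $\gamma:|G|\to|H|$ and a node $n$ of $G$: $\gamma$ is graphic at $n$ if either $n$ is unlabeled, or both $n$ and $\gamma(n)$ are labeled with $\mathcal{L}_H(\gamma(n))=\mathcal{L}_G(n)$ and $\mathcal{S}_H(\gamma(n))=\gamma^*(\mathcal{S}_G(n))$.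 $\gamma$ is strictly graphic at $n$ if either both $n$ and $\gamma(n)$ are unlabeled, or both are labeled with $\mathcal{L}_H(\gamma(n))=\mathcal{L}_G(n)$ and $\mathcal{S}_H(\gamma(n))=\gamma^*(\mathcal{S}_G(n))$. For a set $\Gamma$ of nodes of $G$, $\gamma$ is (strictly) graphic on $\Gamma$ if it is (strictly) graphic at every node of $\Gamma$. *)

From Stdlib Require Import List.
Import ListNotations.
Set Implicit Arguments.

Record signature := Signature {
  op :> Type;
  ar : op -> nat
}.

(* A termgraph over Omega: node type N, labeled-node predicate D,
   labeling L and successor function S, which are only meaningful on D
   (their values at unlabeled nodes are irrelevant); for each labeled node
   the length of S n equals the arity of L n. *)
Record termgraph (Omega : signature) := Termgraph {
  node :> Type;
  labeled : node -> Prop;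
  lab : node -> op Omega;
  succ : node -> list node;
  succ_ar : forall n, labeled n -> length (succ n) = ar Omega (lab n)
}.

Arguments labeled {Omega} t _.
Arguments lab {Omega} t _.
Arguments succ {Omega} t _.

Section Graphic.
Variable Omega : signature.
Variables G H : termgraph Omega.

Definition graphic_at (gamma : G -> H) (n : G) : Prop :=
  ~ labeled G n \/
  (labeled G n /\ labeled H (gamma n) /\
   lab H (gamma n) = lab G n /\ succ H (gamma n) = map gamma (succ G n)).

Definition strictly_graphic_at (gamma : G -> H) (n : G) : Prop :=
  (~ labeled G n /\ ~ labeled H (gamma n)) \/
  (labeled G n /\ labeled H (gamma n) /\
   lab H (gamma n) = lab G n /\ succ H (gamma n) = map gamma (succ G n)).

Definition graphic_on (gamma : G -> H) (Gam : G -> Prop) : Prop :=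
  forall n, Gam n -> graphic_at gamma n.

Definition strictly_graphic_on (gamma : G -> H) (Gam : G -> Prop) : Prop :=
  forall n, Gam n -> strictly_graphic_at gamma n.
End Graphic.
Arguments graphic_at {Omega G H} gamma n.
Arguments strictly_graphic_at {Omega G H} gamma n.
Arguments graphic_on {Omega G H} gamma Gam.
Arguments strictly_graphic_on {Omega G H} gamma Gam.

Definition image {A B : Type} (f : A -> B) (X : A -> Prop) : B -> Prop :=
  fun b => exists a, X a /\ f a = b.

From Stdlib Require Import List.

(* Strictness is what makes [gamma n] labeled whenever [n] is, so the labeled
   branch of [graphic_at gamma' n] is the only one left to transfer to [eta]. *)
Lemma graphic_at_factor {Omega : signature} {G H H' : termgraph Omega}
  {gamma : G -> H} {gamma' : G -> H'} {eta : H -> H'} {n : G} :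
  (forall m, gamma' m = eta (gamma m)) ->
  strictly_graphic_at gamma n ->
  graphic_at gamma' n ->
  graphic_at eta (gamma n).
Proof.
  intros Hcomp Hstrict Hgraph.
  destruct Hstrict as [[_ Hunl] | [Hl [HlH [Hlab Hsucc]]]].
  - left; exact Hunl.
  - destruct Hgraph as [Hunl | [_ [HlH' [Hlab' Hsucc']]]]; [contradiction |].
    right; rewrite <- Hcomp; repeat split.
    + exact HlH.
    + exact HlH'.
    + rewrite Hlab', Hlab; reflexivity.
    + rewrite Hsucc', Hsucc, map_map.
      apply map_ext; intro; apply Hcomp.
Qed.

Theorem lemma1 (Omega : signature) (G H H' : termgraph Omega)
  (gamma : G -> H) (gamma' : G -> H') (eta : H -> H')
  (Gam : G -> Prop) :
  (forall n, gamma' n = eta (gamma n)) ->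
  strictly_graphic_on gamma Gam ->
  graphic_on gamma' Gam ->
  graphic_on eta (image gamma Gam).
Proof.
  intros Hcomp Hstrict Hgraph m [n [Hn <-]].
  exact (graphic_at_factor Hcomp (Hstrict n Hn) (Hgraph n Hn)).
Qed.
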